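(* Let $m\ge 3$. Let $X_1,\dots,X_m\in\mathbb{C}^n$ with $X_i=(x_{i,1},\dots,x_{i,n})$, and let $\alpha_1,\dots,\alpha_m\in\mathbb{Z}_{\ge0}^n$. Put $X_i^{\alpha_j}=x_{i,1}^{\alpha_{j,1}}\cdots x_{i,n}^{\alpha_{j,n}}$. Let $$M=\max_{i,j}|X_i^{\alpha_j}|,\qquad B=\max_{i,j,k}\Big\{|X_i^{\alpha_j}-X_i^{\alpha_k}|,\ |X_j^{\alpha_i}-X_k^{\alpha_i}|\Big\},$$ with all indices ranging over $1,\dots,m$. Let $a_1,\dots,a_m\in\mathbb{C}$ and $\varepsilon=\max_{1\le i\le m}|a_i|$. Fix a column index $k\in\{1,\dots,m\}$ and let $V_m$ be the determinant of the $m\times m$ matrix obtained from $\big(X_i^{\alpha_j}\big)_{i,j=1}^m$ by replacing its $k$-th column with $(a_1,\dots,a_m)^T$. Then $|V_m|\le M^{m-2}\,m!\,B\,\varepsilon$. *)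

(* Complex numbers: any numClosedFieldType C (e.g. C = R[i]). *)
From HB Require Import structures.
From mathcomp Require Import all_boot all_order all_algebra.
Set Implicit Arguments. Unset Strict Implicit. Unset Printing Implicit Defensive.
Import Order.TTheory GRing.Theory Num.Theory.
Local Open Scope ring_scope.

Definition mono (C : numClosedFieldType) (m n : nat)
  (X : 'I_m -> 'I_n -> C) (alpha : 'I_m -> 'I_n -> nat) (i j : 'I_m) : C :=
  \prod_(l < n) X i l ^+ alpha j l.

(* M = max_{i,j} |X_i^{alpha_j}| (norms are real, so Num.max is the usual max) *)
Definition Mbound (C : numClosedFieldType) (m n : nat)
  (X : 'I_m -> 'I_n -> C) (alpha : 'I_m -> 'I_n -> nat) : C :=
  \big[Num.max/0]_(i < m) \big[Num.max/0]_(j < m) `|mono X alpha i j|.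

Definition Bbound (C : numClosedFieldType) (m n : nat)
  (X : 'I_m -> 'I_n -> C) (alpha : 'I_m -> 'I_n -> nat) : C :=
  \big[Num.max/0]_(i < m) \big[Num.max/0]_(j < m) \big[Num.max/0]_(k < m)
    Num.max `|mono X alpha i j - mono X alpha i k|
            `|mono X alpha j i - mono X alpha k i|.

Definition epsbound (C : numClosedFieldType) (m : nat) (a : 'I_m -> C) : C :=
  \big[Num.max/0]_(i < m) `|a i|.

Definition Vdet (C : numClosedFieldType) (m n : nat)
  (X : 'I_m -> 'I_n -> C) (alpha : 'I_m -> 'I_n -> nat) (a : 'I_m -> C)
  (k : 'I_m) : C :=
  \det (\matrix_(i < m, j < m) (if j == k then a i else mono X alpha i j)).

(* Since m >= 3 there are two columns j1 <> j2 besides the column k of the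
   a_i.  Subtracting column j2 from column j1 does not change the determinant
   and makes every entry of column j1 a difference X_i^{alpha_j1} - X_i^{alpha_j2},
   bounded by B.  In the Leibniz expansion of the new determinant each of the
   m! terms then takes one factor from column k (at most eps), one from column
   j1 (at most B) and m - 2 factors bounded by M. *)
From mathcomp Require Import all_boot all_order all_algebra all_fingroup.
From mathcomp Require Import ring.
Import Order.TTheory GRing.Theory Num.Theory.
Local Open Scope ring_scope.

Lemma le_bigmax_real {R : numDomainType} {I : finType} {x0 : R} {F : I -> R}
    (i0 : I) :
  x0 \is Num.real -> (forall i, F i \is Num.real) ->
  F i0 <= \big[Num.max/x0]_i F i.
Proof.
move=> x0_real F_real; have : i0 \in index_enum I by rewrite mem_index_enum.
elim: (index_enum I) => // i r IHr; rewrite inE big_cons.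
have tail_real : \big[Num.max/x0]_(j <- r) F j \is Num.real by exact: bigmax_real.
rewrite comparable_le_max ?real_comparable //.
by case/predU1P => [->|/IHr ->]; rewrite ?lexx ?orbT.
Qed.

Lemma exists_two_neq {T : finType} (k : T) : (2 < #|T|)%N ->
  exists j1 j2 : T, [/\ j1 != j2, j1 != k & j2 != k].
Proof.
move=> card_T; have : (1 < #|[set~ k]|)%N.
  by rewrite cardsC1 -ltnS (ltn_predK card_T).
case/card_gt1P => j1 [j2 []]; rewrite !in_setC1 => j1k j2k j12.
by exists j1, j2.
Qed.

Lemma det_add_scaled_col {R : comPzRingType} {n : nat} (A : 'M[R]_n)
    {j1 j2 : 'I_n} (c : R) :
  j1 != j2 ->
  \det (\matrix_(i, j) (if j == j1 then A i j1 + c * A i j2 else A i j))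
    = \det A.
Proof.
move=> j12; set A' := \matrix_(i, j) _.
pose A2 := \matrix_(i, j) (if j == j1 then A i j2 else A i j).
have det_A2 : \det A2 = 0.
  rewrite -det_tr; apply: (determinant_alternate j12) => i.
  by rewrite !mxE eqxx eq_sym (negbTE j12).
have off_j1 i : (lift j1 i == j1) = false by rewrite eq_sym (negbTE (neq_lift _ _)).
rewrite -det_tr -[\det A]det_tr.
rewrite (@determinant_multilinear _ _ A'^T A^T A2^T j1 1 c).
- by rewrite !det_tr det_A2 mulr0 addr0 mul1r.
- by apply/rowP => i; rewrite !mxE eqxx mul1r.
- by apply/matrixP => i j; rewrite !mxE off_j1.
- by apply/matrixP => i j; rewrite !mxE off_j1.
Qed.

Lemma normr_det_le {R : numDomainType} {n : nat} (A : 'M[R]_n)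
    (c : 'I_n -> R) :
  (forall i j, `|A i j| <= c j) -> `|\det A| <= n`!%:R * \prod_j c j.
Proof.
move=> A_le; apply: le_trans (ler_norm_sum _ _ _) _.
rewrite mulr_natl -card_Sn -sumr_const; apply: ler_sum => s _.
rewrite normrMsign normr_prod [X in _ <= X](reindex_inj (@perm_inj _ s)) /=.
by apply: ler_prod => i _; rewrite normr_ge0 A_le.
Qed.

Lemma prodr_const_except2 {R : comPzSemiRingType} {m : nat} (k j1 : 'I_m)
    (x y z : R) :
  j1 != k ->
  \prod_j (if j == k then x else if j == j1 then y else z)
    = x * y * z ^+ (m - 2).
Proof.
move=> j1k; rewrite (bigD1 k) //= eqxx (bigD1 j1) //= (negbTE j1k) eqxx mulrA.
rewrite (eq_bigr (fun=> z)) => [|j /andP[jk jj1]]; last first.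
  by rewrite (negbTE jk) (negbTE jj1).
rewrite prodr_const; congr (_ * _ ^+ _).
have := cardD1 j1 (predC1 k); rewrite cardC1 card_ord !inE j1k.
move/(congr1 predn); rewrite add1n subn2 /= => ->.
by apply: eq_card => j; rewrite !inE andbC.
Qed.

Section Bounds.
Variables (C : numClosedFieldType) (m n : nat).
Variables (X : 'I_m -> 'I_n -> C) (alpha : 'I_m -> 'I_n -> nat).

Lemma norm_mono_le_Mbound i j : `|mono X alpha i j| <= Mbound X alpha.
Proof.
have row_real i' : \big[Num.max/0]_(j' < m) `|mono X alpha i' j'| \is Num.real.
  by apply: bigmax_real => // j' _; apply: normr_real.
apply: le_trans (le_bigmax_real i (real0 _) row_real).
exact: le_bigmax_real j (real0 _) (fun=> normr_real _).
Qed.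

Lemma norm_mono_sub_le_Bbound i j1 j2 :
  `|mono X alpha i j1 - mono X alpha i j2| <= Bbound X alpha.
Proof.
pose d p q r := Num.max `|mono X alpha p q - mono X alpha p r|
                        `|mono X alpha q p - mono X alpha r p|.
have d_real p q r : d p q r \is Num.real by apply: max_real; apply: normr_real.
have row_real p q : \big[Num.max/0]_(r < m) d p q r \is Num.real.
  exact: bigmax_real.
have slice_real p : \big[Num.max/0]_(q < m) \big[Num.max/0]_(r < m) d p q r
    \is Num.real by exact: bigmax_real.
apply: le_trans (le_bigmax_real i (real0 _) slice_real).
apply: le_trans (le_bigmax_real j1 (real0 _) (row_real i)).
apply: le_trans (le_bigmax_real j2 (real0 _) (d_real i j1)).
by rewrite comparable_le_max ?lexx // real_comparable ?normr_real.
Qed.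

End Bounds.

Lemma norm_le_epsbound {C : numClosedFieldType} {m : nat} (a : 'I_m -> C) i :
  `|a i| <= epsbound a.
Proof. exact: le_bigmax_real i (real0 _) (fun=> normr_real _). Qed.

Theorem theorem3 (C : numClosedFieldType) (m n : nat) (hm : (3 <= m)%N)
  (X : 'I_m -> 'I_n -> C) (alpha : 'I_m -> 'I_n -> nat) (a : 'I_m -> C)
  (k : 'I_m) :
  `|Vdet X alpha a k| <=
    Mbound X alpha ^+ (m - 2) * (m`!)%:R * Bbound X alpha * epsbound a.
Proof.
have := exists_two_neq k; rewrite card_ord => /(_ hm) [j1 [j2 [j12 j1k j2k]]].
rewrite /Vdet; set V := \matrix_(i, j) _.
rewrite -(det_add_scaled_col V (-1) j12).
pose c j := if j == k then epsbound a
            else if j == j1 then Bbound X alpha else Mbound X alpha.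
apply: le_trans (normr_det_le _ c _) _ => [i j|].
  rewrite /c !mxE (negbTE j1k) (negbTE j2k) mulN1r.
  have [-> | jj1] := eqVneq j j1.
    by rewrite (negbTE j1k) norm_mono_sub_le_Bbound.
  by case: (j == k); rewrite ?(negbTE jj1) ?norm_le_epsbound ?norm_mono_le_Mbound.
rewrite prodr_const_except2 // le_eqVlt; apply/orP; left; apply/eqP; ring.
Qed.
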